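(* Let $N>0$, $\gamma>0$, $\mathcal{R}_0>0$, and let $(S,I,R):[0,\infty)\to\mathbb{R}^3$ be the solution of $$S'=-\frac{\gamma\mathcal{R}_0 SI}{N},\qquad I'=\frac{\gamma\mathcal{R}_0 SI}{N}-\gamma I,\qquad R'=\gamma I,$$ with initial data $S(0)>0$, $I(0)>0$, $R(0)\ge 0$, $S(0)+I(0)+R(0)=N$. Let $I_{\max}=\sup_{t\ge0}I(t)$, and let $M$ be a real number with $I(0)<M<S(0)+I(0)$. Suppose $\mathcal{R}_0\ge \frac{N}{S(0)}$. Then $I_{\max}\le M$ if and only if $$\mathcal{R}_0\le N\,\frac{W_{-1}\!\left(\frac{M-N+R(0)}{S(0)\,e}\right)}{M-N+R(0)}.$$
   Context: SIR epidemic model written with basic reproduction number $\mathcal{R}_0=\beta N/\gamma$; along solutions $S+I+R\equiv N$. $I_{\max}$ denotes the maximum (supremum) of $I(t)$ over $t\ge0$. $W_{-1}$ is the lower real branch of the Lambert $W$ function: for $x\in[-1/e,0)$, $W_{-1}(x)$ is the unique real $y\le -1$ with $ye^y=x$. (Under the hypotheses, $M-N+R(0)<0$ and the argument of $W_{-1}$ lies in $(-1/e,0)$.) *)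

From Stdlib Require Import Reals Lra ClassicalEpsilon.
From Coquelicot Require Import Coquelicot.
Open Scope R_scope.

(* Lower real branch W_{-1} of Lambert W: for x in [-1/e,0), the unique real
   y <= -1 with y e^y = x.  Defined by (classical) choice; outside [-1/e,0)
   its value is unspecified (irrelevant here). *)
Definition LambertWm1 (x : R) : R :=
  epsilon (inhabits 0) (fun y => y <= -1 /\ y * exp y = x).

(* (S,I,R) : [0,oo) -> R^3 is a solution of the SIR system with parameters
   N, gamma, R0: differentiable on (0,oo) with the given derivatives and
   right-continuous at 0 (i.e. a classical solution on [0,oo)). *)
Definition SIR_solution (N gamma R0 : R) (S I Rc : R -> R) : Prop :=
  (forall t, 0 < t ->
      is_derive S t (- (gamma * R0 * S t * I t / N)) /\
      is_derive I t (gamma * R0 * S t * I t / N - gamma * I t) /\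
      is_derive Rc t (gamma * I t)) /\
  filterlim S (at_right 0) (locally (S 0)) /\
  filterlim I (at_right 0) (locally (I 0)) /\
  filterlim Rc (at_right 0) (locally (Rc 0)).

Definition Imax (I : R -> R) : Rbar :=
  Lub_Rbar (fun x => exists t, 0 <= t /\ x = I t).

(* Write c = N / R0; the hypothesis R0 >= N / S(0) says c <= S(0).
   1. Along a solution, V = I + S - c ln S is a first integral, and S, I stay positive for
      all t >= 0 (continuous induction: before a first failure time, V bounds ln S from
      below and I(t) >= I(0) e^{-gamma t}; both bounds survive at that time).
   2. Hence I(t) = V(0) - S(t) + c ln S(t) <= V(0) - c + c ln c =: I_peak, because
      c ln (S/c) <= S - c.  The bound is attained where S = c, and such a time exists:
      while S > c, I stays above I(0), so S decreases at rate at least gamma I(0).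
      Thus I_max = I(0) + S(0) - c - c ln (S(0) / c).
   3. The inequality I_max <= M is turned into the Lambert-W form of the statement
      through the monotonicity of y |-> y e^y on (-oo, -1].
   The file first collects tools from real analysis (right continuity, monotonicity from
   the sign of the derivative, continuous induction), then facts on W_{-1}, then the
   dynamics of the SIR system, and finally the algebra and the theorem. *)

From Stdlib Require Import Reals Lra Classical ClassicalEpsilon.
From Coquelicot Require Import Coquelicot.
Open Scope R_scope.

Definition right_continuous (f : R -> R) (t : R) : Prop :=
  filterlim f (at_right t) (locally (f t)).

Lemma right_continuous_of_continuous f t : continuous f t -> right_continuous f t.
Proof.
  intros Hf. unfold right_continuous, at_right.
  eapply filterlim_filter_le_1; [apply filter_le_within | exact Hf].
Qed.

Lemma right_continuous_plus f g t :
  right_continuous f t -> right_continuous g t -> right_continuous (fun s => f s + g s) t.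
Proof.
  intros Hf Hg. eapply filterlim_comp_2; [exact Hf | exact Hg |].
  apply (filterlim_plus (f t) (g t)).
Qed.

Lemma right_continuous_mult f g t :
  right_continuous f t -> right_continuous g t -> right_continuous (fun s => f s * g s) t.
Proof.
  intros Hf Hg. eapply filterlim_comp_2; [exact Hf | exact Hg |].
  apply (filterlim_mult (f t) (g t)).
Qed.

Lemma right_continuous_opp f t : right_continuous f t -> right_continuous (fun s => - f s) t.
Proof. intros Hf. eapply filterlim_comp; [exact Hf | apply (filterlim_opp (f t))]. Qed.

Lemma right_continuous_comp g f t :
  right_continuous f t -> continuous g (f t) -> right_continuous (fun s => g (f s)) t.
Proof. intros Hf Hg. eapply filterlim_comp; [exact Hf | exact Hg]. Qed.

Lemma right_continuous_pos f t :
  right_continuous f t -> 0 < f t -> at_right t (fun s => 0 < f s).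
Proof.
  intros Hf Hpos. generalize (proj1 (filterlim_locally f (f t)) Hf (mkposreal _ Hpos)).
  apply filter_imp. intros s Hs. change (Rabs (f s - f t) < f t) in Hs.
  apply Rabs_def2 in Hs. lra.
Qed.

Lemma at_right_interval t (P : R -> Prop) :
  at_right t P -> exists d, 0 < d /\ forall s, t < s < t + d -> P s.
Proof.
  intros [d Hd]. exists d. split; [apply cond_pos |]. intros s Hs.
  apply Hd; [| lra]. change (Rabs (s - t) < d). apply Rabs_def1; lra.
Qed.

Lemma is_derive_eq (f : R -> R) x l l' : is_derive f x l -> l = l' -> is_derive f x l'.
Proof. intros H <-. exact H. Qed.

Lemma nondecreasing_on (f df : R -> R) a b : a <= b ->
  (forall t, a <= t <= b -> is_derive f t (df t)) ->
  (forall t, a <= t <= b -> 0 <= df t) -> f a <= f b.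
Proof.
  intros Hab Hd Hpos.
  destruct (MVT_gen f a b df) as [c [Hc Heq]];
    rewrite ?Rmin_left, ?Rmax_right in * by lra.
  - intros x Hx. apply Hd; lra.
  - intros x Hx. apply continuity_pt_filterlim, (ex_derive_continuous f x).
    exists (df x). apply Hd; lra.
  - assert (0 <= df c * (b - a)) by (apply Rmult_le_pos; [apply Hpos | ]; lra). lra.
Qed.

Lemma nondecreasing_from_0 (f df : R -> R) T : right_continuous f 0 ->
  (forall t, 0 < t < T -> is_derive f t (df t)) ->
  (forall t, 0 < t < T -> 0 <= df t) ->
  forall b, 0 <= b < T -> f 0 <= f b.
Proof.
  intros Hf Hd Hpos b Hb. apply Rnot_lt_le. intros Hlt.
  assert (Hnear : at_right 0 (fun x => 0 < f x - f b)).
  { apply (right_continuous_pos (fun x => f x - f b)); [| lra].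
    apply right_continuous_plus; [exact Hf |].
    apply right_continuous_of_continuous, continuous_const. }
  destruct (at_right_interval 0 _ Hnear) as [d [Hd0 Hx]].
  assert (Hb0 : 0 < b) by (destruct (Req_dec b 0) as [-> |]; lra).
  set (x := Rmin (d / 2) b).
  assert (0 < x) by (apply Rmin_glb_lt; lra).
  assert (x <= b) by apply Rmin_r.
  assert (x <= d / 2) by apply Rmin_l.
  assert (f x <= f b) by (apply (nondecreasing_on f df); intros; [lra | apply Hd | apply Hpos]; lra).
  specialize (Hx x ltac:(lra)). lra.
Qed.

Lemma constant_from_0 (f : R -> R) T : right_continuous f 0 ->
  (forall t, 0 < t < T -> is_derive f t 0) ->
  forall b, 0 <= b < T -> f b = f 0.
Proof.
  intros Hf Hd b Hb.
  assert (f 0 <= f b) by (apply (nondecreasing_from_0 f (fun _ => 0) T); auto; intros; lra).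
  assert (- f 0 <= - f b).
  { apply (nondecreasing_from_0 (fun s => - f s) (fun _ => 0) T); auto.
    - now apply right_continuous_opp.
    - intros t Ht. rewrite <- Ropp_0. apply (is_derive_opp f), Hd, Ht.
    - intros; lra. }
  lra.
Qed.

Lemma lower_bound_at_endpoint f t m : 0 < t -> continuous f t ->
  (forall s, 0 < s < t -> m <= f s) -> m <= f t.
Proof.
  intros Ht Hf H. apply Rnot_lt_le. intros Hlt.
  destruct (proj1 (filterlim_locally f (f t)) Hf (mkposreal (m - f t) ltac:(lra))) as [d Hd].
  set (x := Rmax (t - d / 2) (t / 2)).
  assert (t - d / 2 <= x) by apply Rmax_l.
  assert (t / 2 <= x) by apply Rmax_r.
  assert (x < t) by (apply Rmax_lub_lt; generalize (cond_pos d); lra).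
  assert (Hx : Rabs (f x - f t) < m - f t).
  { apply (Hd x). change (Rabs (x - t) < d). apply Rabs_def1; lra. }
  apply Rabs_def2 in Hx. specialize (H x ltac:(lra)). lra.
Qed.

Lemma continuous_induction (P : R -> Prop) :
  (forall t, 0 <= t -> (forall s, 0 <= s < t -> P s) -> P t) ->
  (forall t, 0 <= t -> (forall s, 0 <= s <= t -> P s) -> at_right t P) ->
  forall t, 0 <= t -> P t.
Proof.
  intros Hleft Hright t1 Ht1. apply NNPP. intros Hn.
  set (E := fun T => 0 <= T /\ forall s, 0 <= s <= T -> P s).
  assert (HE0 : E 0).
  { split; [lra |]. intros s Hs. replace s with 0 by lra. apply Hleft; [lra | intros; lra]. }
  assert (Hbound : forall T, E T -> T <= t1).
  { intros T [_ HP]. apply Rnot_lt_le. intros HT. apply Hn, HP. lra. }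
  destruct (completeness E) as [m [Hub Hlub]]; [now exists t1 | now exists 0 |].
  assert (Hm0 : 0 <= m) by now apply Hub.
  assert (Hbefore : forall s, 0 <= s < m -> P s).
  { intros s Hs. apply NNPP. intros HPs.
    assert (m <= s); [| lra]. apply Hlub. intros T [_ HT]. apply Rnot_lt_le. intros HsT.
    apply HPs, HT. lra. }
  assert (Hupto : forall s, 0 <= s <= m -> P s).
  { intros s Hs. destruct (Req_dec s m) as [-> |]; [now apply Hleft | apply Hbefore; lra]. }
  destruct (at_right_interval m P (Hright m Hm0 Hupto)) as [d [Hd HP]].
  assert (E (m + d / 2)).
  { split; [lra |]. intros s Hs.
    destruct (Rle_lt_dec s m); [apply Hupto | apply HP]; lra. }
  assert (m + d / 2 <= m) by now apply Hub.
  lra.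
Qed.

Lemma exp_le_iff a b : exp a <= exp b <-> a <= b.
Proof.
  split; intros H.
  - apply Rnot_lt_le. intros Hlt. generalize (exp_increasing _ _ Hlt). lra.
  - destruct H as [H | ->]; [left; now apply exp_increasing | lra].
Qed.

Lemma xexp_decreasing a b : a < b -> b <= -1 -> b * exp b < a * exp a.
Proof.
  intros Hab Hb.
  assert (Hd : 1 + (b - a) < exp (b - a)) by (apply exp_ineq1; lra).
  assert (Hb_exp : exp b = exp a * exp (b - a)) by (rewrite <- exp_plus; f_equal; ring).
  assert (0 < exp a) by apply exp_pos.
  assert (b * exp (b - a) < a) by nra.
  rewrite Hb_exp. replace (b * (exp a * exp (b - a))) with (b * exp (b - a) * exp a) by ring.
  apply Rmult_lt_compat_r; assumption.
Qed.

(* x e^x reaches every value in (-1/e, 0) on (-oo, -1]: intermediate values on [-K, -1],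
   with K large enough that K e^{-K} < -x. *)
Lemma LambertWm1_exists x : - / exp 1 < x < 0 -> exists y, y <= -1 /\ y * exp y = x.
Proof.
  intros [Hlo Hhi].
  set (K := 4 / (- x) + 1).
  assert (0 < 4 / (- x)) by (apply Rdiv_lt_0_compat; lra).
  assert (HxK : 4 < - x * K) by (unfold K; field_simplify; lra).
  assert (HK : 1 < K) by (unfold K; lra).
  assert (Hhalf : 1 + K / 2 < exp (K / 2)) by (apply exp_ineq1; lra).
  assert (HeK : exp K = exp (K / 2) * exp (K / 2)) by (rewrite <- exp_plus; f_equal; field).
  assert (Hbig : K * K / 4 < exp K) by (rewrite HeK; nra).
  assert (HxK' : x < - K * exp (- K)).
  { rewrite exp_Ropp. assert (0 < exp K) by apply exp_pos.
    apply (Rmult_lt_reg_r (exp K)); [assumption |].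
    replace (- K * / exp K * exp K) with (- K) by (field; lra).
    assert (x * exp K < x * (K * K / 4)) by (apply Rmult_lt_gt_compat_neg_l; lra).
    nra. }
  assert (Hm1 : -1 * exp (-1) = - / exp 1).
  { rewrite <- (exp_Ropp 1). replace (- (1)) with (-1) by ring. ring. }
  destruct (Ranalysis5.IVT_interv (fun y => x - y * exp y) (- K) (-1)) as [y [Hy Hy0]].
  - intros a _. apply continuity_pt_filterlim,
      (ex_derive_continuous (fun y => x - y * exp y)). auto_derive. auto.
  - unfold K; lra.
  - simpl. lra.
  - simpl. lra.
  - exists y. simpl in Hy0. split; lra.
Qed.

Lemma LambertWm1_spec x : - / exp 1 < x < 0 ->
  LambertWm1 x <= -1 /\ LambertWm1 x * exp (LambertWm1 x) = x.
Proof. intros Hx. unfold LambertWm1. apply epsilon_spec, LambertWm1_exists, Hx. Qed.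

Lemma LambertWm1_le_iff x z : - / exp 1 < x < 0 -> z <= -1 ->
  (LambertWm1 x <= z <-> z * exp z <= x).
Proof.
  intros Hx Hz. destruct (LambertWm1_spec x Hx) as [HW HWx].
  set (W := LambertWm1 x) in *. rewrite <- HWx. split; intros H.
  - destruct (Req_dec W z) as [-> | Hne]; [lra |].
    left. apply xexp_decreasing; lra.
  - apply Rnot_lt_le. intros Hlt.
    assert (W * exp W < z * exp z) by (apply xexp_decreasing; lra). lra.
Qed.

Lemma ln_le_sub1 u : 0 < u -> ln u <= u - 1.
Proof.
  intros Hu. rewrite <- (ln_exp (u - 1)). apply ln_le; [exact Hu |].
  generalize (exp_ineq1_le (u - 1)). lra.
Qed.

Lemma Imax_attained (f : R -> R) t0 : 0 <= t0 ->
  (forall t, 0 <= t -> f t <= f t0) -> Imax f = Finite (f t0).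
Proof.
  intros Ht0 Hle. apply is_lub_Rbar_unique. split.
  - intros x [t [Ht ->]]. now apply Hle.
  - intros b Hb. apply Hb. now exists t0.
Qed.

Section SIRDynamics.

Variables (N gamma R0 : R) (S I Rc : R -> R).
Hypothesis HN : 0 < N.
Hypothesis Hgamma : 0 < gamma.
Hypothesis HR0 : 0 < R0.
Hypothesis Hsol : SIR_solution N gamma R0 S I Rc.
Hypothesis HS0 : 0 < S 0.
Hypothesis HI0 : 0 < I 0.

Lemma S_derive t : 0 < t -> is_derive S t (- (gamma * R0 * S t * I t / N)).
Proof. intros Ht. apply (proj1 Hsol t Ht). Qed.

Lemma I_derive t : 0 < t -> is_derive I t (gamma * R0 * S t * I t / N - gamma * I t).
Proof. intros Ht. apply (proj1 Hsol t Ht). Qed.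

Lemma S_right_continuous t : 0 <= t -> right_continuous S t.
Proof.
  intros Ht. destruct (Req_dec t 0) as [-> | Ht0]; [exact (proj1 (proj2 Hsol)) |].
  apply right_continuous_of_continuous, (ex_derive_continuous S t).
  eexists. apply S_derive. lra.
Qed.

Lemma I_right_continuous t : 0 <= t -> right_continuous I t.
Proof.
  intros Ht. destruct (Req_dec t 0) as [-> | Ht0]; [exact (proj1 (proj2 (proj2 Hsol))) |].
  apply right_continuous_of_continuous, (ex_derive_continuous I t).
  eexists. apply I_derive. lra.
Qed.

(* The first integral of the system, with threshold c = N / R0. *)
Definition V (t : R) : R := I t + S t - N / R0 * ln (S t).

(* dV/dt = I' + S' - c S'/S = 0 wherever S > 0. *)
Lemma V_derive t : 0 < t -> 0 < S t -> is_derive V t 0.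
Proof.
  intros Ht HSt.
  assert (H := is_derive_minus _ _ t _ _
    (is_derive_plus _ _ t _ _ (I_derive t Ht) (S_derive t Ht))
    (is_derive_scal _ t (N / R0) _
       (is_derive_comp ln S t _ _ (is_derive_ln _ HSt) (S_derive t Ht)))).
  apply (is_derive_eq _ _ _ _ H).
  unfold minus, plus, opp, scal; simpl. unfold mult; simpl. field. lra.
Qed.

Lemma V_constant T : (forall s, 0 <= s < T -> 0 < S s) ->
  forall t, 0 <= t < T -> V t = V 0.
Proof.
  intros HS. apply constant_from_0.
  - apply right_continuous_plus; [apply right_continuous_plus |].
    + apply I_right_continuous; lra.
    + apply S_right_continuous; lra.
    + apply right_continuous_opp, right_continuous_mult.
      * apply right_continuous_of_continuous, continuous_const.
      * apply right_continuous_comp; [apply S_right_continuous; lra | apply continuous_ln, HS0].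
  - intros t Ht. apply V_derive; [| apply HS]; lra.
Qed.

(* While S and I are positive, I' >= -gamma I, so I(s) >= I(0) e^{-gamma s}. *)
Lemma I_exp_lower_bound T : (forall s, 0 <= s < T -> 0 < S s /\ 0 < I s) ->
  forall s, 0 <= s < T -> I 0 * exp (- gamma * s) <= I s.
Proof.
  intros Hpos s Hs.
  assert (Hgrow : I 0 * exp (gamma * 0) <= I s * exp (gamma * s)).
  { apply (nondecreasing_from_0 (fun u => I u * exp (gamma * u))
             (fun u => exp (gamma * u) * (gamma * R0 * S u * I u / N)) T); [| | | exact Hs].
    - apply right_continuous_mult; [apply I_right_continuous; lra |].
      apply right_continuous_of_continuous, (ex_derive_continuous (fun u => exp (gamma * u))).
      auto_derive. auto.
    - intros u Hu.
      assert (He : is_derive (fun u => exp (gamma * u)) u (gamma * exp (gamma * u)))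
        by (auto_derive; [auto | ring]).
      assert (Hm := is_derive_mult _ _ u _ _ (I_derive u ltac:(lra)) He Rmult_comm).
      apply (is_derive_eq _ _ _ _ Hm). unfold plus, mult; simpl. field. lra.
    - intros u Hu. destruct (Hpos u ltac:(lra)) as [HSu HIu].
      apply Rmult_le_pos; [left; apply exp_pos |].
      apply Rmult_le_pos; [| left; apply Rinv_0_lt_compat; lra].
      repeat apply Rmult_le_pos; lra. }
  rewrite Rmult_0_r, exp_0, Rmult_1_r in Hgrow.
  assert (Hinv : exp (gamma * s) * exp (- gamma * s) = 1)
    by (rewrite <- exp_plus, <- exp_0; f_equal; ring).
  assert (0 < exp (- gamma * s)) by apply exp_pos.
  apply (Rmult_le_compat_r (exp (- gamma * s))) in Hgrow; [| lra].
  rewrite Rmult_assoc, Hinv, Rmult_1_r in Hgrow. exact Hgrow.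
Qed.

(* Before a first failure time t, V is conserved, which
   bounds ln S from below, and I(s) >= I(0) e^{-gamma s}; both bounds pass to t.  After t,
   right continuity keeps S and I positive for a while. *)
Lemma SI_positive t : 0 <= t -> 0 < S t /\ 0 < I t.
Proof.
  revert t. apply continuous_induction.
  - intros u Hu Hbefore. destruct (Req_dec u 0) as [-> | Hu0]; [auto |].
    assert (HS_before : forall s, 0 <= s < u -> 0 < S s) by (intros s Hs; apply Hbefore, Hs).
    assert (Hu' : 0 < u) by lra.
    split.
    + apply Rlt_le_trans with (exp (- V 0 / (N / R0))); [apply exp_pos |].
      apply lower_bound_at_endpoint; [exact Hu' | apply (ex_derive_continuous S u);
        eexists; apply S_derive, Hu' |].
      intros s Hs. destruct (Hbefore s ltac:(lra)) as [HSs HIs].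
      assert (HV := V_constant u HS_before s ltac:(lra)).
      assert (HVs : V s = I s + S s - N / R0 * ln (S s)) by reflexivity.
      rewrite <- (exp_ln (S s)) by exact HSs. apply exp_le_iff.
      assert (Hc : 0 < N / R0) by (apply Rdiv_lt_0_compat; lra).
      apply (Rmult_le_reg_l (N / R0)); [exact Hc |].
      replace (N / R0 * (- V 0 / (N / R0))) with (- V 0) by (field; split; lra). lra.
    + apply Rlt_le_trans with (I 0 * exp (- gamma * u));
        [apply Rmult_lt_0_compat; [exact HI0 | apply exp_pos] |].
      apply lower_bound_at_endpoint; [exact Hu' | apply (ex_derive_continuous I u);
        eexists; apply I_derive, Hu' |].
      intros s Hs. eapply Rle_trans; [| apply (I_exp_lower_bound u Hbefore s); lra].
      apply Rmult_le_compat_l; [lra |]. apply exp_le_iff.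
      assert (gamma * s <= gamma * u) by (apply Rmult_le_compat_l; lra). lra.
  - intros u Hu Hupto. destruct (Hupto u ltac:(lra)) as [HSu HIu].
    apply filter_and; apply right_continuous_pos; auto.
    + apply S_right_continuous, Hu.
    + apply I_right_continuous, Hu.
Qed.

Lemma V_conserved t : 0 <= t -> V t = V 0.
Proof.
  intros Ht. apply (V_constant (t + 1)); [| lra].
  intros s Hs. apply SI_positive. lra.
Qed.

Lemma S_le_S0 t : 0 <= t -> S t <= S 0.
Proof.
  intros Ht.
  assert (- S 0 <= - S t); [| lra].
  apply (nondecreasing_from_0 (fun u => - S u) (fun u => gamma * R0 * S u * I u / N) (t + 1));
    [| | | lra].
  - apply right_continuous_opp, S_right_continuous. lra.
  - intros u Hu. rewrite <- (Ropp_involutive (gamma * R0 * S u * I u / N)).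
    apply (is_derive_opp S), S_derive. lra.
  - intros u Hu. destruct (SI_positive u ltac:(lra)) as [HSu HIu].
    apply Rmult_le_pos; [| left; apply Rinv_0_lt_compat; lra].
    repeat apply Rmult_le_pos; lra.
Qed.

(* The peak value of I predicted by the first integral: V(0) - c + c ln c. *)
Definition I_peak : R := I 0 + S 0 - N / R0 - N / R0 * ln (S 0 / (N / R0)).

(* I(t) = V(0) - S(t) + c ln S(t), and S |-> c ln S - S is maximal at S = c. *)
Lemma I_le_peak t : 0 <= t -> I t <= I_peak.
Proof.
  intros Ht. destruct (SI_positive t Ht) as [HSt _].
  assert (HV := V_conserved t Ht). unfold V, I_peak in *.
  set (c := N / R0) in *. assert (Hc : 0 < c) by (apply Rdiv_lt_0_compat; lra).
  assert (Hl := ln_le_sub1 (S t / c) ltac:(apply Rdiv_lt_0_compat; lra)).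
  rewrite ln_div in Hl by lra. rewrite ln_div by lra.
  apply (Rmult_le_compat_l c) in Hl; [| lra].
  replace (c * (S t / c - 1)) with (S t - c) in Hl by (field; lra).
  lra.
Qed.

Lemma I_at_threshold t : 0 <= t -> S t = N / R0 -> I t = I_peak.
Proof.
  intros Ht HSt. assert (HV := V_conserved t Ht). unfold V, I_peak in *.
  rewrite HSt in HV. rewrite ln_div by (try apply Rdiv_lt_0_compat; lra). lra.
Qed.

Lemma I_ge_I0_above_threshold t : 0 <= t -> N / R0 < S t -> I 0 <= I t.
Proof.
  intros Ht Habove. destruct (SI_positive t Ht) as [HSt _].
  assert (HSle := S_le_S0 t Ht).
  assert (HV := V_conserved t Ht). unfold V in HV.
  set (c := N / R0) in *. assert (Hc : 0 < c) by (apply Rdiv_lt_0_compat; lra).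
  assert (Hl := ln_le_sub1 (S 0 / S t) ltac:(apply Rdiv_lt_0_compat; lra)).
  rewrite ln_div in Hl by lra.
  apply (Rmult_le_compat_l c) in Hl; [| lra].
  assert (c * (S 0 / S t - 1) <= S 0 - S t).
  { apply (Rmult_le_reg_r (S t)); [exact HSt |].
    replace (c * (S 0 / S t - 1) * S t) with (c * (S 0 - S t)) by (field; lra). nra. }
  lra.
Qed.

(* If S stayed above c forever, then S' <= -gamma I <= -gamma I(0). *)
Lemma S_linear_decrease : (forall t, 0 <= t -> N / R0 < S t) ->
  forall t, 0 <= t -> S t + gamma * I 0 * t <= S 0.
Proof.
  intros Habove t Ht.
  assert (- S 0 - gamma * I 0 * 0 <= - S t - gamma * I 0 * t); [| lra].
  apply (nondecreasing_from_0 (fun u => - S u - gamma * I 0 * u)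
           (fun u => gamma * R0 * S u * I u / N - gamma * I 0) (t + 1)); [| | | lra].
  - apply right_continuous_plus; [apply right_continuous_opp, S_right_continuous; lra |].
    apply right_continuous_of_continuous,
      (ex_derive_continuous (fun u => - (gamma * I 0 * u))).
    auto_derive. auto.
  - intros u Hu.
    assert (Hlin : is_derive (fun u => gamma * I 0 * u) u (gamma * I 0))
      by (auto_derive; [auto | ring]).
    assert (H := is_derive_minus _ _ u _ _ (is_derive_opp S u _ (S_derive u ltac:(lra))) Hlin).
    apply (is_derive_eq _ _ _ _ H). unfold minus, plus, opp; simpl. ring.
  - intros u Hu. destruct (SI_positive u ltac:(lra)) as [HSu HIu].
    assert (HIge := I_ge_I0_above_threshold u ltac:(lra) (Habove u ltac:(lra))).
    assert (Hratio : 1 < R0 * S u / N).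
    { apply (Rmult_lt_reg_r N); [exact HN |].
      replace (R0 * S u / N * N) with (R0 * S u) by (field; lra).
      assert (H := Habove u ltac:(lra)).
      apply (Rmult_lt_compat_l R0) in H; [| exact HR0].
      replace (R0 * (N / R0)) with N in H by (field; lra). lra. }
    replace (gamma * R0 * S u * I u / N) with (gamma * I u * (R0 * S u / N)) by (field; lra).
    assert (0 < gamma * I u) by nra.
    nra.
Qed.

Lemma S_eventually_below_threshold : exists t, 0 <= t /\ S t <= N / R0.
Proof.
  apply NNPP. intros Hnever.
  assert (Habove : forall t, 0 <= t -> N / R0 < S t).
  { intros t Ht. apply Rnot_le_lt. intros Hle. apply Hnever. now exists t. }
  set (T := S 0 / (gamma * I 0)).
  assert (HT : 0 < T) by (apply Rdiv_lt_0_compat; nra).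
  assert (Hdec := S_linear_decrease Habove T ltac:(lra)).
  replace (gamma * I 0 * T) with (S 0) in Hdec by (unfold T; field; nra).
  assert (0 < N / R0) by (apply Rdiv_lt_0_compat; lra).
  specialize (Habove T ltac:(lra)). lra.
Qed.

Lemma S_reaches_threshold : N / R0 <= S 0 -> exists t, 0 <= t /\ S t = N / R0.
Proof.
  intros Hc. destruct S_eventually_below_threshold as [t1 [Ht1 HSt1]].
  set (c := N / R0) in *.
  destruct (Req_dec (S 0) c) as [Heq | Hne]; [exists 0; split; [lra | exact Heq] |].
  destruct (Req_dec (S t1) c) as [Heq1 | Hne1]; [exists t1; split; assumption |].
  assert (Ht1_pos : 0 < t1) by (destruct (Req_dec t1 0) as [-> |]; lra).
  assert (Hnear : at_right 0 (fun s => 0 < S s - c)).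
  { apply (right_continuous_pos (fun s => S s - c)); [| lra].
    apply right_continuous_plus; [apply S_right_continuous; lra |].
    apply right_continuous_of_continuous, continuous_const. }
  destruct (at_right_interval 0 _ Hnear) as [d [Hd Habove]].
  set (e := Rmin (d / 2) (t1 / 2)).
  assert (e <= d / 2) by apply Rmin_l.
  assert (e <= t1 / 2) by apply Rmin_r.
  assert (0 < e) by (apply Rmin_glb_lt; lra).
  specialize (Habove e ltac:(lra)).
  destruct (Ranalysis5.IVT_interv (fun u => c - S u) e t1) as [z [Hz Hz0]];
    simpl in *; [| lra | lra | lra |].
  - intros a Ha. apply continuity_pt_filterlim,
      (ex_derive_continuous (fun u => c - S u)).
    auto_derive. eexists. apply S_derive. lra.
  - exists z. split; lra.
Qed.

Lemma Imax_eq_peak : N / R0 <= S 0 -> Imax I = Finite I_peak.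
Proof.
  intros Hc. destruct (S_reaches_threshold Hc) as [t [Ht HSt]].
  rewrite <- (I_at_threshold t Ht HSt).
  apply Imax_attained; [exact Ht |].
  intros s Hs. rewrite (I_at_threshold t Ht HSt). now apply I_le_peak.
Qed.
End SIRDynamics.

Lemma le_div_pos_iff a b d : 0 < d -> (a <= b / d <-> a * d <= b).
Proof.
  intros Hd. split; intros H.
  - apply (Rmult_le_compat_r d) in H; [| lra].
    replace (b / d * d) with b in H by (field; lra). exact H.
  - apply (Rmult_le_reg_r d); [exact Hd |].
    replace (b / d * d) with b by (field; lra). exact H.
Qed.

Lemma le_div_neg_iff a b d : d < 0 -> (a <= b / d <-> b <= a * d).
Proof.
  intros Hd. replace (b / d) with (- b / - d) by (field; lra).
  rewrite le_div_pos_iff by lra. lra.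
Qed.

(* The purely algebraic part: with c = N / R0 <= s0 and A = M - N + r0 in (-s0, 0),
   both sides of the equivalence say  -1 - ln(s0 / c) <= A / c;  for the Lambert-W side
   this uses W_{-1}(x) <= z <-> z e^z <= x with x = A / (s0 e) = (A / c) e^{-1 - ln(s0/c)}. *)
Lemma peak_le_iff_LambertWm1 (N R0 s0 i0 r0 M : R) :
  0 < N -> 0 < R0 -> 0 < s0 -> s0 + i0 + r0 = N -> i0 < M -> M < s0 + i0 -> N / R0 <= s0 ->
  (i0 + s0 - N / R0 - N / R0 * ln (s0 / (N / R0)) <= M <->
   R0 <= N * LambertWm1 ((M - N + r0) / (s0 * exp 1)) / (M - N + r0)).
Proof.
  intros HN HR0 Hs0 Hsum HM1 HM2 Hc.
  set (c := N / R0) in *. assert (Hc0 : 0 < c) by (apply Rdiv_lt_0_compat; lra).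
  set (A := M - N + r0). assert (HA : A = M - s0 - i0) by (unfold A; lra).
  assert (He : 0 < exp 1) by apply exp_pos.
  set (x := A / (s0 * exp 1)).
  assert (Hx : - / exp 1 < x < 0).
  { unfold x. split.
    - replace (- / exp 1) with (- s0 / (s0 * exp 1)) by (field; lra).
      apply Rmult_lt_compat_r; [apply Rinv_0_lt_compat; nra | lra].
    - assert (0 < / (s0 * exp 1)) by (apply Rinv_0_lt_compat; nra). unfold Rdiv. nra. }
  destruct (LambertWm1_spec x Hx) as [HW _]. set (W := LambertWm1 x) in *.
  set (z := A / c). set (v := -1 - ln (s0 / c)).
  assert (Hpeak : i0 + s0 - c - c * ln (s0 / c) <= M <-> v <= z).
  { unfold z. rewrite le_div_pos_iff by exact Hc0. unfold v. lra. }
  assert (HWz : R0 <= N * W / A <-> W <= z).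
  { rewrite le_div_neg_iff by lra.
    replace z with (R0 * A / N) by (unfold z, c; field; lra).
    rewrite le_div_pos_iff by exact HN. lra. }
  rewrite Hpeak, HWz.
  assert (Hv : v <= -1).
  { assert (0 <= ln (s0 / c)); [| unfold v; lra].
    rewrite <- ln_1. apply ln_le; [lra |].
    apply le_div_pos_iff; lra. }
  destruct (Rle_lt_dec (-1) z) as [Hz | Hz]; [lra |].
  set (q := c / (s0 * exp 1)).
  assert (Hq : exp v = q).
  { unfold v, q, Rminus. rewrite exp_plus, exp_Ropp, exp_ln by (apply Rdiv_lt_0_compat; lra).
    replace (-1) with (- (1)) by ring. rewrite exp_Ropp. field. lra. }
  assert (Hxq : x = z * q) by (unfold x, z, q; field; lra).
  assert (0 < q) by (unfold q; apply Rdiv_lt_0_compat; nra).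
  unfold W. rewrite (LambertWm1_le_iff x z Hx) by lra.
  rewrite <- (exp_le_iff v z), Hq, Hxq.
  split; intros; nra.
Qed.

Theorem proposition2 (N gamma R0 M : R) (S I Rc : R -> R) :
  0 < N -> 0 < gamma -> 0 < R0 ->
  SIR_solution N gamma R0 S I Rc ->
  0 < S 0 -> 0 < I 0 -> 0 <= Rc 0 -> S 0 + I 0 + Rc 0 = N ->
  I 0 < M -> M < S 0 + I 0 ->
  N / S 0 <= R0 ->
  (Rbar_le (Imax I) (Finite M) <->
   R0 <= N * LambertWm1 ((M - N + Rc 0) / (S 0 * exp 1)) / (M - N + Rc 0)).
Proof.
  intros HN Hgamma HR0 Hsol HS0 HI0 _ Hsum HM1 HM2 Hthreshold.
  assert (Hc : N / R0 <= S 0).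
  { apply (Rmult_le_reg_r R0); [exact HR0 |].
    replace (N / R0 * R0) with N by (field; lra).
    apply (Rmult_le_compat_r (S 0)) in Hthreshold; [| lra].
    replace (N / S 0 * S 0) with N in Hthreshold by (field; lra). lra. }
  rewrite (Imax_eq_peak N gamma R0 S I Rc HN Hgamma HR0 Hsol HS0 HI0 Hc).
  apply (peak_le_iff_LambertWm1 N R0 (S 0) (I 0) (Rc 0) M); assumption.
Qed.
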